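(* Fix $\epsilon_2>0$ and $(u_\pm,v_\pm)$ with $v_\pm>0$ and $u_->u_++2\epsilon_2$, and for small $\epsilon_1>0$ let $v_*^{\epsilon_2}$, $\sigma_1^{\epsilon_2},\sigma_2^{\epsilon_2}$ be the intermediate density and shock speeds of the two-shock Riemann solution. Then $$\lim_{\epsilon_1\to0}\int_{\sigma_1^{\epsilon_2}}^{\sigma_2^{\epsilon_2}}v_*^{\epsilon_2}\,d\xi=\tfrac12\big(v_+(u_--u_++2\epsilon_2)-v_-(u_+-u_-+2\epsilon_2)\big).$$
   Context: Perturbed Brio system: $u_t+(\tfrac12u^2+\tfrac12\epsilon_1v^2)_x=0$, $v_t+(uv-\epsilon_2v)_x=0$, $\epsilon_1,\epsilon_2>0$, $v>0$. The two-shock intermediate state $(u_*,v_* )$ satisfies $v_*>\max(v_-,v_+)$, $u_+<u_*<u_-$, $$u_*=u_-+(v_*-v_-)\frac{\epsilon_2-\sqrt{\epsilon_2^2+4\epsilon_1(v_*+v_-)^2}}{v_*+v_-},\qquad u_+=u_*+(v_+-v_* )\frac{\epsilon_2+\sqrt{\epsilon_2^2+4\epsilon_1(v_*+v_+)^2}}{v_*+v_+},$$ with shock speeds $\sigma_1=u_-+\frac{v_*(u_*-u_-)}{v_*-v_-}-\epsilon_2$, $\sigma_2=u_++\frac{v_*(u_+-u_* )}{v_+-v_*}-\epsilon_2$. *)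

From Stdlib Require Import Reals Lra.
Open Scope R_scope.

(* Two-shock intermediate state (u_*, v_* ) of the perturbed Brio system
   for parameters eps1, eps2 and Riemann data (um,vm) = (u_-,v_-),
   (up,vp) = (u_+,v_+). *)
Definition two_shock_state (eps1 eps2 um vm up vp us vs : R) : Prop :=
  vs > Rmax vm vp /\ up < us < um /\
  us = um + (vs - vm) * (eps2 - sqrt (eps2 ^ 2 + 4 * eps1 * (vs + vm) ^ 2)) / (vs + vm) /\
  up = us + (vp - vs) * (eps2 + sqrt (eps2 ^ 2 + 4 * eps1 * (vs + vp) ^ 2)) / (vs + vp).

Definition sigma1 (eps2 um vm us vs : R) : R :=
  um + vs * (us - um) / (vs - vm) - eps2.
Definition sigma2 (eps2 up vp us vs : R) : R :=
  up + vs * (up - us) / (vp - vs) - eps2.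

From Stdlib Require Import Reals Lra Psatz.
Open Scope R_scope.

(* Fix eps1 = e > 0, put s = sqrt e and write (us, vs) for
   the intermediate state.  Let a = sqrt (eps2^2 + 4 e (vs + vm)^2) and
   b = sqrt (eps2^2 + 4 e (vs + vp)^2) be the square roots of the Hugoniot
   relations, and A = (a - eps2)/(vs + vm), B = (b + eps2)/(vs + vp) the
   shock slopes.  Then us = um - (vs - vm) A, up = us + (vp - vs) B,
   sigma1 = um - vs A - eps2 and sigma2 = up + vs B - eps2, which gives the
   exact identity
       vs (sigma2 - sigma1) - L = (vm - vp)(a - b)/2 + vm vp (A + B),
   L being the claimed limit.  Square-root estimates give
   0 <= (vm - vp)(a - b) <= 2 s (vm - vp)^2 and 0 <= A <= 2 s, while
   um - up <= a + b forces vs to blow up like 1/s, whence B = O(s).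
   So |vs (sigma2 - sigma1) - L| <= C sqrt e for an explicit C, and such a
   rate implies the limit as e -> 0+. *)

Definition radical (e p c : R) : R := sqrt (p ^ 2 + 4 * e * c ^ 2).

Lemma radical_sq (e p c : R) :
  0 <= e -> radical e p c * radical e p c = p ^ 2 + 4 * e * c ^ 2.
Proof.
  intros He. apply sqrt_sqrt.
  pose proof (pow2_ge_0 p). pose proof (pow2_ge_0 c). nra.
Qed.

(* For e >= 0 the radical lies between max(p, 2 sqrt e c) and p + 2 sqrt e c,
   since its square is p^2 + (2 sqrt e c)^2. *)
Lemma radical_bounds (e p c : R) :
  0 <= e -> 0 <= p -> 0 <= c ->
  p <= radical e p c <= p + 2 * sqrt e * c /\ 2 * sqrt e * c <= radical e p c.
Proof.
  intros He Hp Hc.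
  pose proof (sqrt_pos e) as Hs0.
  assert (Hq : (2 * sqrt e * c) ^ 2 = 4 * e * c ^ 2).
  { replace ((2 * sqrt e * c) ^ 2) with (4 * (sqrt e * sqrt e) * c ^ 2) by ring.
    rewrite sqrt_sqrt by lra. ring. }
  assert (Hq0 : 0 <= 2 * sqrt e * c) by nra.
  pose proof (pow2_ge_0 p). pose proof (pow2_ge_0 c).
  unfold radical. split; [split|].
  - rewrite <- (sqrt_pow2 p) at 1 by lra. apply sqrt_le_1_alt. nra.
  - rewrite <- (sqrt_pow2 (p + 2 * sqrt e * c)) by lra.
    apply sqrt_le_1_alt. rewrite <- Hq. nra.
  - rewrite <- (sqrt_pow2 (2 * sqrt e * c)) by lra.
    apply sqrt_le_1_alt. rewrite Hq. lra.
Qed.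

(* Two radicals with the same p differ by O(sqrt e) in the signed sense
   below: their squares differ by 4 e (c1 - c2)(c1 + c2) while their sum
   is at least 2 sqrt e (c1 + c2). *)
Lemma radical_gap (e p c1 c2 : R) :
  0 < e -> 0 <= p -> 0 < c1 -> 0 < c2 ->
  0 <= (c1 - c2) * (radical e p c1 - radical e p c2) <= 2 * sqrt e * (c1 - c2) ^ 2.
Proof.
  intros He Hp Hc1 Hc2.
  set (s := sqrt e). set (r1 := radical e p c1). set (r2 := radical e p c2).
  assert (Hs : 0 < s) by (apply sqrt_lt_R0; lra).
  assert (Hss : s * s = e) by (apply sqrt_sqrt; lra).
  destruct (radical_bounds e p c1) as [_ H1]; try lra.
  destruct (radical_bounds e p c2) as [_ H2]; try lra.
  fold s r1 in H1. fold s r2 in H2.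
  assert (Hsum : 2 * s * (c1 + c2) <= r1 + r2) by lra.
  assert (Hprod : (c1 - c2) * (r1 - r2) * (r1 + r2)
                  = 4 * (s * s) * (c1 - c2) ^ 2 * (c1 + c2)).
  { replace ((c1 - c2) * (r1 - r2) * (r1 + r2))
      with ((c1 - c2) * (r1 * r1 - r2 * r2)) by ring.
    unfold r1, r2. rewrite !radical_sq, Hss by lra. ring. }
  assert (Hd : 0 <= (c1 - c2) ^ 2) by apply pow2_ge_0.
  assert (Hpos : 0 <= (c1 - c2) * (r1 - r2)).
  { destruct (Rlt_or_le ((c1 - c2) * (r1 - r2)) 0) as [Hneg|]; [|lra].
    assert (0 <= 4 * (s * s) * (c1 - c2) ^ 2 * (c1 + c2)).
    { apply Rmult_le_pos; [|lra]. apply Rmult_le_pos; nra. }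
    assert ((c1 - c2) * (r1 - r2) * (r1 + r2) < 0)
      by (apply Rmult_neg_pos; nra).
    lra. }
  split; [exact Hpos|].
  apply (Rmult_le_reg_r (2 * s * (c1 + c2))); [nra|].
  apply Rle_trans with ((c1 - c2) * (r1 - r2) * (r1 + r2)).
  - apply Rmult_le_compat_l; lra.
  - rewrite Hprod. right. ring.
Qed.

Definition shock1_slope (e eps2 vm vs : R) : R :=
  (radical e eps2 (vs + vm) - eps2) / (vs + vm).
Definition shock2_slope (e eps2 vp vs : R) : R :=
  (radical e eps2 (vs + vp) + eps2) / (vs + vp).

Definition limit_mass (eps2 um vm up vp : R) : R :=
  (vp * (um - up + 2 * eps2) - vm * (up - um + 2 * eps2)) / 2.

Section TwoShock.

Variables (e eps2 um vm up vp us vs : R).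
Hypothesis He : 0 < e.
Hypothesis Heps2 : 0 < eps2.
Hypothesis Hvm : 0 < vm.
Hypothesis Hvp : 0 < vp.
Hypothesis Hstate : two_shock_state e eps2 um vm up vp us vs.

Local Notation a := (radical e eps2 (vs + vm)).
Local Notation b := (radical e eps2 (vs + vp)).
Local Notation A := (shock1_slope e eps2 vm vs).
Local Notation B := (shock2_slope e eps2 vp vs).

Lemma vs_gt : vm < vs /\ vp < vs.
Proof.
  destruct Hstate as [Hmax _].
  pose proof (Rmax_l vm vp). pose proof (Rmax_r vm vp). lra.
Qed.

Lemma hugoniot_slopes : us = um - (vs - vm) * A /\ up = us + (vp - vs) * B.
Proof.
  destruct vs_gt. destruct Hstate as [_ [_ [Hus Hup]]].
  unfold shock1_slope, shock2_slope, radical.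
  split; [rewrite Hus | rewrite Hup at 1]; field; lra.
Qed.

Lemma mass_defect_identity :
  vs * (sigma2 eps2 up vp us vs - sigma1 eps2 um vm us vs)
    - limit_mass eps2 um vm up vp
  = (vm - vp) * (a - b) / 2 + vm * vp * (A + B).
Proof.
  destruct vs_gt. destruct hugoniot_slopes as [Hus Hup].
  assert (Ea : a = A * (vs + vm) + eps2)
    by (unfold shock1_slope; field; lra).
  assert (Eb : b = B * (vs + vp) - eps2)
    by (unfold shock2_slope; field; lra).
  unfold sigma1, sigma2, limit_mass.
  rewrite Ea, Eb, Hup, Hus. field. lra.
Qed.

(* The 1-shock slope is O(sqrt e), since a <= eps2 + 2 sqrt e (vs + vm). *)
Lemma shock1_slope_bounds : 0 <= A <= 2 * sqrt e.
Proof.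
  destruct vs_gt.
  destruct (radical_bounds e eps2 (vs + vm)) as [[Hlo Hhi] _]; try lra.
  unfold shock1_slope. split.
  - apply Rle_mult_inv_pos; lra.
  - apply (Rmult_le_reg_r (vs + vm)); [lra|].
    unfold Rdiv. rewrite Rmult_assoc, Rinv_l by lra. lra.
Qed.

Lemma shock2_slope_bounds : 0 <= B <= 2 * sqrt e + 2 * eps2 / (vs + vp).
Proof.
  destruct vs_gt.
  destruct (radical_bounds e eps2 (vs + vp)) as [[Hlo Hhi] _]; try lra.
  unfold shock2_slope. split.
  - apply Rle_mult_inv_pos; lra.
  - apply (Rmult_le_reg_r (vs + vp)); [lra|].
    replace ((2 * sqrt e + 2 * eps2 / (vs + vp)) * (vs + vp))
      with (2 * sqrt e * (vs + vp) + 2 * eps2) by (field; lra).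
    unfold Rdiv. rewrite Rmult_assoc, Rinv_l by lra. lra.
Qed.

(* The jump um - up is at most a + b, hence at most 2 eps2 + O(sqrt e vs):
   the intermediate density must blow up like 1/sqrt e. *)
Lemma density_blowup :
  um - up - 2 * eps2 <= 2 * sqrt e * (2 + vm / vp) * (vs + vp).
Proof.
  destruct vs_gt. destruct hugoniot_slopes as [Hus Hup].
  destruct shock1_slope_bounds as [HA0 _]. destruct shock2_slope_bounds as [HB0 _].
  destruct (radical_bounds e eps2 (vs + vm)) as [[_ Ha] _]; try lra.
  destruct (radical_bounds e eps2 (vs + vp)) as [[_ Hb] _]; try lra.
  assert (EA : A * (vs + vm) = a - eps2)
    by (unfold shock1_slope; field; lra).
  assert (EB : B * (vs + vp) = b + eps2)
    by (unfold shock2_slope; field; lra).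
  assert (Hjump : um - up <= a + b) by nra.
  assert (Hratio : vs + vm <= (1 + vm / vp) * (vs + vp)).
  { assert (vm / vp * (vs + vp) = vm + vm / vp * vs) by (field; lra).
    assert (0 <= vm / vp * vs) by (apply Rmult_le_pos; [apply Rle_mult_inv_pos|]; lra).
    nra. }
  pose proof (sqrt_pos e). nra.
Qed.

End TwoShock.


Definition rate_constant (eps2 um vm up vp : R) : R :=
  (vp - vm) ^ 2
  + vm * vp * (4 + 4 * eps2 * (2 + vm / vp) / (um - up - 2 * eps2)).

Lemma mass_defect_rate (e eps2 um vm up vp us vs : R) :
  0 < e -> 0 < eps2 -> 0 < vm -> 0 < vp -> um > up + 2 * eps2 ->
  two_shock_state e eps2 um vm up vp us vs ->
  Rabs (vs * (sigma2 eps2 up vp us vs - sigma1 eps2 um vm us vs)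
        - limit_mass eps2 um vm up vp)
  <= rate_constant eps2 um vm up vp * sqrt e.
Proof.
  intros He Heps2 Hvm Hvp Hu Hstate.
  destruct (vs_gt e eps2 um vm up vp us vs Hstate).
  rewrite (mass_defect_identity e eps2 um vm up vp us vs Hvm Hvp Hstate).
  set (s := sqrt e). set (g := um - up - 2 * eps2). set (K := 2 + vm / vp).
  assert (Hs : 0 < s) by (apply sqrt_lt_R0; lra).
  assert (Hg : 0 < g) by (unfold g; lra).
  assert (HK : 0 < K)
    by (unfold K; assert (0 < vm / vp) by (apply Rdiv_lt_0_compat; lra); lra).
  destruct (radical_gap e eps2 (vs + vm) (vs + vp)) as [Hgap0 Hgap1]; try lra.
  replace (vs + vm - (vs + vp)) with (vm - vp) in Hgap0, Hgap1 by ring.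
  replace ((vm - vp) ^ 2) with ((vp - vm) ^ 2) in Hgap1 by ring.
  fold s in Hgap1.
  (* the contributions of the slopes; the 2-shock one uses the blow-up of vs *)
  destruct (shock1_slope_bounds e eps2 um vm up vp us vs He Heps2 Hvm Hstate)
    as [HA0 HA1].
  destruct (shock2_slope_bounds e eps2 um vm up vp us vs He Heps2 Hvm Hvp Hstate)
    as [HB0 HB1].
  pose proof (density_blowup e eps2 um vm up vp us vs He Heps2 Hvm Hvp Hstate)
    as Hblow.
  fold s g K in HA1, HB1, Hblow.
  assert (Hinv : 2 * eps2 / (vs + vp) <= 4 * eps2 * K / g * s).
  { apply (Rmult_le_reg_r ((vs + vp) * g)); [nra|].
    replace (2 * eps2 / (vs + vp) * ((vs + vp) * g)) with (2 * eps2 * g)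
      by (field; lra).
    replace (4 * eps2 * K / g * s * ((vs + vp) * g))
      with (2 * eps2 * (2 * s * K * (vs + vp))) by (field; lra).
    nra. }
  assert (Hvv : 0 < vm * vp) by nra.
  assert (Hslopes : vm * vp * (shock1_slope e eps2 vm vs + shock2_slope e eps2 vp vs)
                    <= vm * vp * (4 + 4 * eps2 * K / g) * s).
  { replace (vm * vp * (4 + 4 * eps2 * K / g) * s)
      with (vm * vp * (4 * s + 4 * eps2 * K / g * s)) by ring.
    apply Rmult_le_compat_l; lra. }
  assert (0 <= vm * vp * (shock1_slope e eps2 vm vs + shock2_slope e eps2 vp vs))
    by nra.
  unfold rate_constant. fold g K.
  rewrite Rabs_pos_eq by lra. lra.
Qed.

Lemma limit1_in_sqrt_rate (f : R -> R) (D : R -> Prop) (l C : R) :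
  (forall x, D x -> 0 < x) ->
  (forall x, D x -> Rabs (f x - l) <= C * sqrt x) ->
  limit1_in f D l 0.
Proof.
  intros Hpos Hrate eps Heps.
  set (r := eps / (Rabs C + 1)).
  pose proof (Rabs_pos C) as HC.
  assert (Hr : 0 < r) by (apply Rdiv_lt_0_compat; lra).
  exists (r * r). split; [nra|].
  intros x [Hx Hdist]. simpl in *. unfold R_dist in *.
  pose proof (Hpos x Hx) as Hx0.
  rewrite Rminus_0_r, Rabs_pos_eq in Hdist by lra.
  assert (Hsx : sqrt x < r).
  { rewrite <- (sqrt_square r) by lra. apply sqrt_lt_1_alt. lra. }
  assert (C * sqrt x <= Rabs C * r).
  { pose proof (Rle_abs C). pose proof (sqrt_pos x). nra. }
  assert (Hcr : Rabs C * r + r = eps) by (unfold r; field; lra).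
  pose proof (Hrate x Hx). lra.
Qed.

Theorem lemma6p4 (eps2 um vm up vp : R)
  (Heps2 : 0 < eps2) (Hvm : 0 < vm) (Hvp : 0 < vp)
  (Hu : um > up + 2 * eps2)
  (delta : R) (Hdelta : 0 < delta) (us vs : R -> R)
  (Hsol : forall e1, 0 < e1 < delta ->
     two_shock_state e1 eps2 um vm up vp (us e1) (vs e1)) :
  limit1_in
    (fun e1 => vs e1 * (sigma2 eps2 up vp (us e1) (vs e1)
                        - sigma1 eps2 um vm (us e1) (vs e1)))
    (fun e1 => 0 < e1 < delta)
    ((vp * (um - up + 2 * eps2) - vm * (up - um + 2 * eps2)) / 2)
    0.
Proof.
  apply (limit1_in_sqrt_rate _ _ _ (rate_constant eps2 um vm up vp)).
  - intros e1 He1. apply He1.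
  - intros e1 He1. apply mass_defect_rate; try lra. apply Hsol, He1.
Qed.
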